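(* Let $G_1,G_2$ be $3$-edge colorable cubic graphs, and let $G_1\,Y\,G_2$ and $G_1\,H\,G_2$ be particular compositions of them. Let $c_1,c_2$ be proper $3$-edge colorings of $G_1$ and $d_1,d_2$ proper $3$-edge colorings of $G_2$. If $(c_1\,Y\,d_1)\sim(c_2\,Y\,d_2)$ in $G_1\,Y\,G_2$ (respectively $(c_1\,H\,d_1)\sim(c_2\,H\,d_2)$ in $G_1\,H\,G_2$), then $c_1\sim c_2$ in $G_1$ and $d_1\sim d_2$ in $G_2$.
   Context: Graphs are finite; multiple edges allowed, loops not. Proper $3$-edge colorings use colors $\{1,2,3\}$, adjacent edges receiving different colors. For colors $a\neq b$, an edge-Kempe chain is a connected component of the subgraph of edges colored $a$ or $b$; an edge-Kempe switch swaps $a,b$ on one chain; $\sim$ denotes equivalence under finite sequences of such switches. Composition Y: choose $v_1\in G_1$ with incident edges $x_j=v_1s_{1j}$ and $v_2\in G_2$ with incident edges $y_j=v_2s_{2j}$ ($j=1,2,3$); $G_1\,Y\,G_2$ deletes $v_1,v_2$ and adds edges $s_{1j}s_{2j}$. Composition H: choose edges $x=s_{11}s_{12}\in G_1$, $y=s_{21}s_{22}\in G_2$; $G_1\,H\,G_2$ deletes $x,y$ and adds $s_{11}s_{21},s_{12}s_{22}$. For proper $3$-edge colorings $c$ of $G_1$, $d$ of $G_2$: let $\hat d$ be obtained from $d$ by a global color permutation with $\hat d(y_j)=c(x_j)$; $c\,Y\,d$ colors $G_1-v_1$ by $c$, $G_2-v_2$ by $\hat d$, and $s_{1j}s_{2j}$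 by $c(x_j)$. Let $\tilde d$ be obtained from $d$ by a global color permutation with $\tilde d(y)=c(x)$; $c\,H\,d$ colors $G_1-x$ by $c$, $G_2-y$ by $\tilde d$, and both new edges by $c(x)$. *)

From HB Require Import structures.
From mathcomp Require Import all_boot fingroup perm.
Set Implicit Arguments. Unset Strict Implicit. Unset Printing Implicit Defensive.

(* A finite multigraph: each edge has an (ordered, but only used as an
   unordered pair) pair of distinct endpoints. *)
Record mgraph := MGraph {
  vert : finType;
  edge : finType;
  ends : edge -> vert * vert;
  loopless : forall e, (ends e).1 != (ends e).2 }.

Definition incident (G : mgraph) (v : vert G) (e : edge G) : bool :=
  ((ends e).1 == v) || ((ends e).2 == v).

Definition cubic (G : mgraph) : Prop :=
  forall v : vert G, #|[set e | incident v e]| = 3.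

Definition coloring (G : mgraph) := {ffun edge G -> 'I_3}.

Definition proper_coloring (G : mgraph) (c : coloring G) : Prop :=
  forall (e f : edge G) (v : vert G),
    e != f -> incident v e -> incident v f -> c e != c f.

Definition colorable3 (G : mgraph) : Prop := exists c : coloring G, proper_coloring c.

Definition kadj (G : mgraph) (c : coloring G) (a b : 'I_3) : rel (vert G) :=
  fun u w => [exists e, (c e \in [:: a; b]) &&
                        ((ends e == (u, w)) || (ends e == (w, u)))].

Definition kswitch (G : mgraph) (c : coloring G) (a b : 'I_3) (u : vert G)
  : coloring G :=
  [ffun e => if (c e \in [:: a; b]) && connect (kadj c a b) u (ends e).1
             then (if c e == a then b else a) else c e].

Inductive kequiv (G : mgraph) : coloring G -> coloring G -> Prop :=
| kequiv_refl c : kequiv c c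
| kequiv_step c (a b : 'I_3) (u : vert G) c' :
    a != b -> kequiv (kswitch c a b u) c' -> kequiv c c'.

Lemma notinc_neq1 (G : mgraph) (v : vert G) (e : edge G) :
  ~~ incident v e -> (ends e).1 != v.
Proof. by rewrite /incident negb_or => /andP[]. Qed.

Lemma notinc_neq2 (G : mgraph) (v : vert G) (e : edge G) :
  ~~ incident v e -> (ends e).2 != v.
Proof. by rewrite /incident negb_or => /andP[]. Qed.

Definition oend (G : mgraph) (v : vert G) (e : edge G) : vert G :=
  if (ends e).1 == v then (ends e).2 else (ends e).1.

Lemma oend_neq (G : mgraph) (v : vert G) (e : edge G) : oend v e != v.
Proof.
rewrite /oend; case: ifP => [/eqP He|/negbT //].
by rewrite -He eq_sym; apply: loopless.
Qed.

Section CompY.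
Variables (G1 G2 : mgraph) (v1 : vert G1) (v2 : vert G2).
Variables (x : 'I_3 -> edge G1) (y : 'I_3 -> edge G2).

Definition Yvert : finType :=
  ({u : vert G1 | u != v1} + {u : vert G2 | u != v2})%type.
Definition Yedge : finType :=
  (({e : edge G1 | ~~ incident v1 e} + {e : edge G2 | ~~ incident v2 e})
   + 'I_3)%type.

Definition Yends (ee : Yedge) : Yvert * Yvert :=
  match ee with
  | inl (inl e) =>
      (inl (exist _ (ends (val e)).1 (notinc_neq1 (valP e))),
       inl (exist _ (ends (val e)).2 (notinc_neq2 (valP e))))
  | inl (inr e) =>
      (inr (exist _ (ends (val e)).1 (notinc_neq1 (valP e))),
       inr (exist _ (ends (val e)).2 (notinc_neq2 (valP e))))
  | inr j =>
      (inl (exist _ (oend v1 (x j)) (oend_neq v1 (x j))),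
       inr (exist _ (oend v2 (y j)) (oend_neq v2 (y j))))
  end.

Lemma Yloopless ee : (Yends ee).1 != (Yends ee).2.
Proof.
case: ee => [[e|e]|j] //=.
- apply/negP => /eqP [] /eqP; exact/negP/loopless.
- apply/negP => /eqP [] /eqP; exact/negP/loopless.
Qed.

Definition Ygraph : mgraph := MGraph Yloopless.

(* f is the coloring c Y d: G1 - v1 colored by c, G2 - v2 by the (unique,
   when c,d are proper) global permutation p of d with p (d y_j) = c x_j,
   and the new edge s_{1j}s_{2j} by c x_j *)
Definition Ycol (c : coloring G1) (d : coloring G2) (f : coloring Ygraph)
  : Prop :=
  exists p : {perm 'I_3},
    (forall j, p (d (y j)) = c (x j)) /\
    (forall ee : Yedge, f ee = match ee with
                              | inl (inl e) => c (val e)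
                              | inl (inr e) => p (d (val e))
                              | inr j => c (x j)
                              end).
End CompY.

Section CompH.
Variables (G1 G2 : mgraph) (x : edge G1) (y : edge G2).
(* endpoint labelling: x = s11 s12, y = s21 s22 (checked in the theorem) *)
Variables (s11 s12 : vert G1) (s21 s22 : vert G2).

Definition Hvert : finType := (vert G1 + vert G2)%type.
Definition Hedge : finType :=
  (({e : edge G1 | e != x} + {e : edge G2 | e != y}) + bool)%type.

Definition Hends (ee : Hedge) : Hvert * Hvert :=
  match ee with
  | inl (inl e) => (inl (ends (val e)).1, inl (ends (val e)).2)
  | inl (inr e) => (inr (ends (val e)).1, inr (ends (val e)).2)
  | inr false => (inl s11, inr s21)
  | inr true => (inl s12, inr s22)
  end.

Lemma Hloopless ee : (Hends ee).1 != (Hends ee).2.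
Proof.
case: ee => [[e|e]|[|]] //=.
- apply/negP => /eqP [] /eqP; exact/negP/loopless.
- apply/negP => /eqP [] /eqP; exact/negP/loopless.
Qed.

Definition Hgraph : mgraph := MGraph Hloopless.

Definition Hcol (c : coloring G1) (d : coloring G2) (f : coloring Hgraph)
  : Prop :=
  exists p : {perm 'I_3},
    p (d y) = c x /\
    (forall ee : Hedge, f ee = match ee with
                              | inl (inl e) => c (val e)
                              | inl (inr e) => p (d (val e))
                              | inr _ => c x
                              end).
End CompH.

From mathcomp Require Import all_boot fingroup perm.
Set Implicit Arguments. Unset Strict Implicit. Unset Printing Implicit Defensive.

(* A Kempe switch in the composition restricts, on each side, to either nothing
   or a single Kempe switch of that side: contract the other side to the deleted
   vertex (for Y) or to an end of the deleted edge (for H). The restriction is a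
   single switch because of parity: for a proper 3-edge coloring of a cubic
   graph, each color class meets the cut of a vertex set S in a number of edges
   of the parity of |S|. So the three cut edges of G1 Y G2 have distinct colors,
   the two cut edges of G1 H G2 have equal colors, and an (a,b)-chain entering a
   side through a cut edge leaves it through another one; hence all cut edges
   of a chain lie in a single chain of each side. On G2 the coloring is d up to
   a global color permutation, which is itself a product of Kempe switches. *)

Section KempeChains.
Variable G : mgraph.
Implicit Types (c : coloring G) (a b : 'I_3) (u v z : vert G) (e : edge G).

Lemma kadj_sym c a b : symmetric (kadj c a b).
Proof.
by move=> u w; apply/existsP/existsP => -[e /andP[Hc He]]; exists e; rewrite Hc orbC.
Qed.

Lemma kconnect_sym c a b : connect_sym (kadj c a b).
Proof. exact/sym_connect_sym/kadj_sym. Qed.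

Lemma kadj_ends c a b e : c e \in [:: a; b] -> kadj c a b (ends e).1 (ends e).2.
Proof.
by move=> Hc; apply/existsP; exists e; rewrite Hc; case: (ends e) => ? ? /=; rewrite eqxx.
Qed.

Lemma kconnect_ends c a b e : c e \in [:: a; b] ->
  connect (kadj c a b) (ends e).2 (ends e).1.
Proof. by move=> Hc; apply: connect1; rewrite kadj_sym kadj_ends. Qed.

Lemma kconnect_edge c a b z e : c e \in [:: a; b] ->
  connect (kadj c a b) z (ends e).1 = connect (kadj c a b) z (ends e).2.
Proof.
move=> Hc; apply/idP/idP => Hz; apply: connect_trans Hz _; last exact: kconnect_ends.
exact/connect1/kadj_ends.
Qed.

Lemma kconnect_incident c a b v e : c e \in [:: a; b] -> incident v e ->
  connect (kadj c a b) v (ends e).1.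
Proof.
by move=> Hc /orP[]/eqP <-; [exact: connect0 | exact: kconnect_ends].
Qed.

Lemma mem_kswitch c a b u e :
  (kswitch c a b u e \in [:: a; b]) = (c e \in [:: a; b]).
Proof.
rewrite ffunE; case: ifP => // /andP[-> _].
by case: eqP; rewrite !inE eqxx ?orbT.
Qed.

Lemma kadj_kswitch c a b u : kadj (kswitch c a b u) a b =2 kadj c a b.
Proof. by move=> p q; apply: eq_existsb => e; rewrite mem_kswitch. Qed.

Lemma kswitchK c a b u : kswitch (kswitch c a b u) a b u = c.
Proof.
apply/ffunP => e; rewrite {1}/kswitch ffunE mem_kswitch
  (eq_connect (kadj_kswitch c a b u)) /kswitch ffunE.
case: ifP => [/andP[Hab Hu]|-> //]; rewrite Hab Hu; move: Hab; rewrite !inE.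
by case: (c e =P a) => [->|_] /=; [case: (b =P a) | move/eqP->; rewrite eqxx].
Qed.

Lemma kequiv_trans c1 c2 c3 : kequiv c1 c2 -> kequiv c2 c3 -> kequiv c1 c3.
Proof. by elim=> // c a b u c' Hab _ IH /IH; apply: kequiv_step. Qed.

Lemma kequiv_sym c1 c2 : kequiv c1 c2 -> kequiv c2 c1.
Proof.
elim=> [c|c a b u c' Hab _ IH]; first exact: kequiv_refl.
apply: kequiv_trans IH (kequiv_step (a := a) (b := b) (u := u) _ _) => //.
by rewrite kswitchK; apply: kequiv_refl.
Qed.

Lemma kswitch_proper c a b u :
  proper_coloring c -> proper_coloring (kswitch c a b u).
Proof.
move=> Hp e f v Hef Hve Hvf; have Hcef := Hp e f v Hef Hve Hvf.
rewrite !ffunE.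
case He: (c e \in [:: a; b]); case Hf: (c f \in [:: a; b]) => /=.
- have Hchain : connect (kadj c a b) (ends e).1 (ends f).1.
    apply: connect_trans (kconnect_incident Hf Hvf).
    by rewrite kconnect_sym; apply: kconnect_incident.
  rewrite -(same_connect_r (kconnect_sym c a b) Hchain).
  case: (connect _ u _) => //; move: He Hf Hcef; rewrite !inE.
  move=> /orP[]/eqP-> /orP[]/eqP->; rewrite ?eqxx //;
    by case: (b =P a) => [->|/eqP]; rewrite ?eqxx // eq_sym.
- by case: (connect _ u _) => //; apply: contraFN Hf => /eqP <-; case: eqP; rewrite !inE eqxx ?orbT.
- by case: (connect _ u _) => //; apply: contraFN He => /eqP ->; case: eqP; rewrite !inE eqxx ?orbT.
- exact: Hcef.
Qed.

Definition recolor (p : {perm 'I_3}) c : coloring G := [ffun e => p (c e)].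

Definition kswitch_seq c a b (s : seq (vert G)) : coloring G :=
  [ffun e => if (c e \in [:: a; b]) && has (connect (kadj c a b) ^~ (ends e).1) s
             then (if c e == a then b else a) else c e].

Lemma kswitch_seq_kequiv c a b s : a != b -> kequiv c (kswitch_seq c a b s).
Proof.
move=> Hab; elim: s => [|u s IH].
  have -> : kswitch_seq c a b [::] = c by apply/ffunP => e; rewrite ffunE andbF.
  exact: kequiv_refl.
apply: kequiv_trans IH _.
case Hu: (has (connect (kadj c a b) ^~ u) s).
  have -> : kswitch_seq c a b (u :: s) = kswitch_seq c a b s; last exact: kequiv_refl.
  apply/ffunP => e; rewrite !ffunE /=.
  case: (c e \in _) => //=; case Hue: (connect _ u _) => //=.
  suff -> : has (connect (kadj c a b) ^~ (ends e).1) s by [].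
  by case/hasP: Hu => t Ht Htu; apply/hasP; exists t => //; apply: connect_trans Htu Hue.
apply: (kequiv_step (a := a) (b := b) (u := u)) => //.
have Hmem e : (kswitch_seq c a b s e \in [:: a; b]) = (c e \in [:: a; b]).
  rewrite ffunE; case: ifP => // /andP[-> _].
  by case: eqP; rewrite !inE eqxx ?orbT.
have Hadj : kadj (kswitch_seq c a b s) a b =2 kadj c a b.
  by move=> q r; apply: eq_existsb => e; rewrite Hmem.
have -> : kswitch (kswitch_seq c a b s) a b u = kswitch_seq c a b (u :: s);
  last exact: kequiv_refl.
apply/ffunP => e; rewrite /kswitch ffunE (eq_connect Hadj) Hmem /kswitch_seq !ffunE /=.
case Hc: (c e \in _) => //=; case Hue: (connect _ u _) => //=.
suff -> : has (connect (kadj c a b) ^~ (ends e).1) s = false by [].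
apply/negbTE/hasPn => t Ht; apply: contraFN Hu => Hte; apply/hasP; exists t => //.
by apply: connect_trans Hte _; rewrite kconnect_sym.
Qed.

(* Swapping a and b everywhere switches every (a,b)-chain. *)
Lemma tperm_kequiv c a b : a != b -> kequiv c (recolor (tperm a b) c).
Proof.
move=> Hab; suff -> : recolor (tperm a b) c = kswitch_seq c a b (enum (vert G)).
  exact: kswitch_seq_kequiv.
apply/ffunP => e; rewrite !ffunE.
have -> : has (connect (kadj c a b) ^~ (ends e).1) (enum (vert G)).
  by apply/hasP; exists (ends e).1; rewrite ?mem_enum ?connect0.
rewrite andbT !inE; case: (c e =P a) => [->|Ha]; first by rewrite tpermL.
case: (c e =P b) => [->|Hb] /=; first by rewrite tpermR.
by rewrite tpermD // eq_sym; apply/eqP.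
Qed.

Lemma kequiv_recolor c (p : {perm 'I_3}) : kequiv c (recolor p c).
Proof.
have [ts -> Hts] := prod_tpermP p.
elim: ts c Hts => [|t ts IH] c /=.
  by move=> _; rewrite (_ : recolor _ c = c) ?big_nil; [apply: kequiv_refl|
    apply/ffunP => e; rewrite ffunE perm1].
case/andP=> Ht Hts; rewrite big_cons; apply: kequiv_trans (tperm_kequiv c Ht) _.
suff -> : recolor (tperm t.1 t.2 * \prod_(j <- ts) tperm j.1 j.2)%g c =
          recolor (\prod_(j <- ts) tperm j.1 j.2)%g (recolor (tperm t.1 t.2) c).
  exact: IH.
by apply/ffunP => e; rewrite !ffunE permM.
Qed.
End KempeChains.

Lemma card_set_sum (T : finType) (P : pred T) : #|[set x | P x]| = \sum_x P x.
Proof. by rewrite -sum1_card big_mkcond; apply: eq_bigr => x _; rewrite inE; case: (P x). Qed.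

Lemma sum_eq_mem (T : finType) (S : {set T}) x : \sum_(v in S) (x == v) = (x \in S).
Proof.
have [Hx|Hx] := boolP (x \in S); last first.
  by rewrite big1 // => v Hv; case: eqP Hx => // ->; rewrite Hv.
rewrite (bigD1 x) //= eqxx big1 // => v /andP[_ Hv].
by rewrite eq_sym (negbTE Hv).
Qed.

Section CubicParity.
Variable G : mgraph.
Implicit Types (c : coloring G) (k : 'I_3) (S : {set vert G}).

Definition crosses S (e : edge G) := ((ends e).1 \in S) != ((ends e).2 \in S).

Lemma card_color_at c k v : #|[set e | incident v e]| = 3 -> proper_coloring c ->
  #|[set e | incident v e & c e == k]| = 1.
Proof.
move=> H3 Hp; set I := [set e | incident v e].
have Hinj : {in I &, injective c}.
  by move=> e f; rewrite !inE => He Hf; apply: contra_eq => Hef; apply: Hp Hef He Hf.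
have : k \in c @: I.
  suff -> : c @: I = setT by [].
  by apply/eqP; rewrite eqEcard subsetT cardsT card_ord card_in_imset // H3.
case/imsetP=> e0 He0 ->; apply/eqP/cards1P; exists e0; apply/setP => e.
rewrite !inE; apply/andP/eqP => [[Hi /eqP]|->]; last by rewrite -inE.
by move=> Hc; apply: Hinj Hc => //; rewrite inE.
Qed.

(* Each vertex of S sees exactly one k-edge; an edge with both ends in S is counted twice. *)
Lemma odd_cut_color c k S :
  (forall v, v \in S -> #|[set e | incident v e & c e == k]| = 1) ->
  odd #|[set e | (c e == k) && crosses S e]| = odd #|S|.
Proof.
move=> Hone.
have -> : #|S| = \sum_e \sum_(v in S) ((c e == k) && incident v e).
  rewrite exchange_big -sum1_card; apply: eq_bigr => v Hv.
  rewrite -[RHS]card_set_sum; apply: etrans (esym (Hone v Hv)) _.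
  by apply: eq_card => e; rewrite !inE andbC.
have Hedge e : \sum_(v in S) ((c e == k) && incident v e) =
    ((c e == k) && crosses S e) + 2 * ((c e == k) && ((ends e).1 \in S) && ((ends e).2 \in S)).
  case: (c e == k); last by rewrite big1.
  have -> : \sum_(v in S) (true && incident v e) =
      \sum_(v in S) ((ends e).1 == v) + \sum_(v in S) ((ends e).2 == v).
    rewrite -big_split; apply: eq_bigr => v _ /=; rewrite /incident.
    by case: eqP => [<-|] /=; [rewrite eq_sym (negbTE (loopless e)) | case: eqP].
  by rewrite !sum_eq_mem /crosses; case: (_ \in S); case: (_ \in S).
rewrite (eq_bigr _ (fun e _ => Hedge e)) big_split -big_distrr /= oddD oddM addbF.
by rewrite card_set_sum.
Qed.

Hypothesis cubicG : cubic G.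

Lemma cubic_odd_cut c k S : proper_coloring c ->
  odd #|[set e | (c e == k) && crosses S e]| = odd #|S|.
Proof. by move=> Hp; apply: odd_cut_color => v _; apply: card_color_at. Qed.

Lemma cubic_even_order c : proper_coloring c -> ~~ odd #|vert G|.
Proof.
move=> Hp; rewrite -cardsT -(cubic_odd_cut ord0 setT Hp).
by rewrite (_ : [set e | _] = set0) ?cards0 //; apply/setP => e; rewrite !inE /crosses !inE andbF.
Qed.

(* The part of S in the (a,b)-chain through z is crossed exactly by the a- and
   b-edges of the cut of S whose ends lie in that chain. *)
Lemma odd_kchain_cut c a b k S z : proper_coloring c -> k \in [:: a; b] ->
  odd #|[set e | (c e == k) && connect (kadj c a b) z (ends e).1 && crosses S e]| =
  odd #|[set v in S | connect (kadj c a b) z v]|.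
Proof.
move=> Hp Hk; rewrite -(cubic_odd_cut k _ Hp); apply: congr1.
apply/eq_card => e; rewrite !inE /crosses !inE; case: eqP => //= Hek.
rewrite -(kconnect_edge z (e := e)) ?Hek //.
by case: (connect _ z _); rewrite ?andbT ?andbF.
Qed.
End CubicParity.

Section LocalBijection.
Variables (Gm G : mgraph) (p : vert Gm) (s : vert G) (h : edge Gm -> edge G).
Hypothesis h_incident : forall E, incident p E -> incident s (h E).
Hypothesis h_inj : forall E F, incident p E -> incident p F -> h E = h F -> E = F.

Lemma card_incident_local :
  (forall e, incident s e -> exists2 E, incident p E & h E = e) ->
  #|[set E | incident p E]| = #|[set e | incident s e]|.
Proof.
move=> h_onto; rewrite -(card_in_imset (f := h)); last by move=> E F; rewrite !inE; apply: h_inj.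
apply: eq_card => e; rewrite inE; apply/imsetP/idP => [[E]|/h_onto[E HE <-]].
  by rewrite inE => /h_incident He ->.
by exists E; rewrite ?inE.
Qed.

Lemma proper_local (q : {perm 'I_3}) (c : coloring G) (f : coloring Gm) :
  (forall E, incident p E -> f E = q (c (h E))) -> proper_coloring c ->
  forall E F, E != F -> incident p E -> incident p F -> f E != f F.
Proof.
move=> Hf Hc E F HEF HE HF; rewrite !Hf // (inj_eq perm_inj).
apply: (Hc _ _ s); rewrite ?h_incident //.
by apply: contra HEF => /eqP /(h_inj HE HF) ->.
Qed.
End LocalBijection.

(* [Gm] contains a copy of the edges of [G] via [eps]; [phi] sends the vertices
   of [Gm] to [G], collapsing every edge outside the copy. *)
Section Restriction.
Variables (Gm G : mgraph) (phi : vert Gm -> vert G) (eps : edge G -> edge Gm).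
Hypothesis eps_ends : forall e,
  (phi (ends (eps e)).1 = (ends e).1 /\ phi (ends (eps e)).2 = (ends e).2) \/
  (phi (ends (eps e)).1 = (ends e).2 /\ phi (ends (eps e)).2 = (ends e).1).
Hypothesis phi_collapse : forall E, phi (ends E).1 = phi (ends E).2 \/ exists e, eps e = E.

Definition restrict (f : coloring Gm) : coloring G := [ffun e => f (eps e)].

Definition kchain_lift (f : coloring Gm) a b (psi : vert G -> vert Gm) :=
  forall e, f (eps e) \in [:: a; b] ->
    connect (kadj f a b) (psi (ends e).1) (ends (eps e)).1 /\
    connect (kadj f a b) (psi (ends e).2) (ends (eps e)).1.

Lemma connect_restrict f a b u w : connect (kadj f a b) u w ->
  connect (kadj (restrict f) a b) (phi u) (phi w).
Proof.
case/connectP=> l; elim: l u => [|r l IH] u /=; first by move=> _ ->; apply: connect0.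
case/andP=> /existsP[E /andP[HE Hends]] /IH{}IH /IH; apply: connect_trans.
have Hur : (phi u = phi (ends E).1 /\ phi r = phi (ends E).2) \/
           (phi u = phi (ends E).2 /\ phi r = phi (ends E).1).
  by case/orP: Hends => /eqP ->; [left|right].
case: (phi_collapse E) => [Heq|[e He]].
  by apply: eq_connect0; case: Hur => -[-> ->].
have Hc : restrict f e \in [:: a; b] by rewrite ffunE He.
subst E; case: Hur => -[-> ->]; case: (eps_ends e) => -[-> ->];
  by rewrite ?kconnect_ends //; apply/connect1/kadj_ends.
Qed.

Lemma connect_lift f a b psi u w : kchain_lift f a b psi ->
  connect (kadj (restrict f) a b) u w -> connect (kadj f a b) (psi u) (psi w).
Proof.
move=> Hpsi /connectP[l]; elim: l u => [|r l IH] u /=; first by move=> _ ->; apply: connect0.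
case/andP=> /existsP[e /andP[He Hends]] /IH{}IH /IH; apply: connect_trans.
rewrite ffunE in He; have [H1 H2] := Hpsi e He.
by case/orP: Hends => /eqP Hee; rewrite Hee /= in H1 H2;
  [apply: connect_trans H1 _ | apply: connect_trans H2 _]; rewrite kconnect_sym.
Qed.

(* If the switched chain of [u] meets the copy of [G], its trace there is the
   chain of [phi u]. *)
Lemma restrict_kswitch f a b u psi : kchain_lift f a b psi ->
  restrict (kswitch f a b u) = restrict f \/
  exists w, restrict (kswitch f a b u) = kswitch (restrict f) a b w.
Proof.
move=> Hpsi.
have [/existsP[e0 /andP[He0 Hu0]]|Hnone] :=
  boolP [exists e, (f (eps e) \in [:: a; b]) && connect (kadj f a b) u (ends (eps e)).1];
  last first.
  left; apply/ffunP => e; rewrite !ffunE.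
  by move: Hnone; rewrite negb_exists => /forallP/(_ e); rewrite negb_and => /orP[]/negbTE->;
    rewrite ?andbF.
right; exists (phi u).
have Hdown e : f (eps e) \in [:: a; b] -> connect (kadj f a b) u (ends (eps e)).1 ->
    connect (kadj (restrict f) a b) (phi u) (ends e).1.
  move=> He /connect_restrict Hu; apply: connect_trans Hu _.
  have Hc : restrict f e \in [:: a; b] by rewrite ffunE.
  by case: (eps_ends e) => -[-> _]; [apply: connect0 | apply: kconnect_ends].
have Hu_psi : connect (kadj f a b) u (psi (phi u)).
  apply: connect_trans (Hu0) _; rewrite kconnect_sym.
  exact: connect_trans (connect_lift Hpsi (Hdown e0 He0 Hu0)) (Hpsi e0 He0).1.
apply/ffunP => e; rewrite !ffunE.
case He: (f (eps e) \in [:: a; b]) => //=.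
suff -> : connect (kadj f a b) u (ends (eps e)).1 =
          connect (kadj (restrict f) a b) (phi u) (ends e).1 by [].
apply/idP/idP => [|/(connect_lift Hpsi) Hlift]; first exact: Hdown.
exact: connect_trans Hu_psi (connect_trans Hlift (Hpsi e He).1).
Qed.

Lemma restrict_kequiv f1 f2 :
  (forall f a b, proper_coloring f -> a != b -> exists psi, kchain_lift f a b psi) ->
  proper_coloring f1 -> kequiv f1 f2 -> kequiv (restrict f1) (restrict f2).
Proof.
move=> Hlift Hp1 H; elim: H Hp1 => [f|f a b u f' Hab _ IH] Hp; first exact: kequiv_refl.
have [psi /(restrict_kswitch u)[<-|[w Hw]]] := Hlift f a b Hp Hab.
  exact/IH/kswitch_proper.
by apply: (kequiv_step (a := a) (b := b) (u := w)) => //; rewrite -Hw; apply/IH/kswitch_proper.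
Qed.
End Restriction.

Section OtherEnd.
Variable G : mgraph.
Implicit Types (v w : vert G) (e : edge G).

Lemma oend_ends v e : incident v e -> ends e = (v, oend v e) \/ ends e = (oend v e, v).
Proof.
rewrite /incident /oend; case: (ends e) => p q /=.
by case: (p =P v) => [->|_] /=; [left | move/eqP->; right].
Qed.

Lemma oend_incident v e : incident v e -> incident (oend v e) e.
Proof. by move=> Hv; rewrite /incident; case: (oend_ends Hv) => -> /=; rewrite eqxx ?orbT. Qed.

Lemma oend_eq v w e : incident v e -> incident w e -> w != v -> oend v e = w.
Proof.
move=> Hv; rewrite /incident; case: (oend_ends Hv) => -> /= /orP[]/eqP-> //;
  by rewrite eqxx.
Qed.

Lemma incident_cover (x : 'I_3 -> edge G) v : #|[set e | incident v e]| = 3 ->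
  injective x -> (forall j, incident v (x j)) ->
  forall e, incident v e -> exists j, x j = e.
Proof.
move=> H3 Hx Hxv e He.
have Himg : x @: setT = [set e | incident v e].
  apply/eqP; rewrite eqEcard H3 card_imset // cardsT card_ord leqnn andbT.
  by apply/subsetP => f /imsetP[j _ ->]; rewrite inE.
have : e \in x @: setT by rewrite Himg inE.
by case/imsetP=> j _ ->; exists j.
Qed.
End OtherEnd.

Section CompositionY.
Variables (G1 G2 : mgraph) (v1 : vert G1) (v2 : vert G2).
Variables (x : 'I_3 -> edge G1) (y : 'I_3 -> edge G2).
Hypotheses (cubicG1 : cubic G1) (cubicG2 : cubic G2).
Hypotheses (x_inj : injective x) (x_incident : forall j, incident v1 (x j)).
Hypotheses (y_inj : injective y) (y_incident : forall j, incident v2 (y j)).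
Local Notation YG := (Ygraph v1 v2 x y).

Lemma x_cover e : incident v1 e -> exists j, x j = e.
Proof. exact: incident_cover (cubicG1 v1) x_inj x_incident e. Qed.

Lemma y_cover e : incident v2 e -> exists j, y j = e.
Proof. exact: incident_cover (cubicG2 v2) y_inj y_incident e. Qed.

(* At a vertex of [G1 - v1] the edges of [YG] are those of [G1]; the value on
   edges of [G2] is a dummy. *)
Definition Yfold1 (E : edge YG) : edge G1 :=
  match E with inl (inl e) => val e | inl (inr _) => x ord0 | inr j => x j end.
Definition Yfold2 (E : edge YG) : edge G2 :=
  match E with inl (inr e) => val e | inl (inl _) => y ord0 | inr j => y j end.

Lemma Yfold1_incident (s : {u | u != v1}) E :
  incident (inl s : vert YG) E -> incident (val s) (Yfold1 E).
Proof.
by case: E => [[e|e]|j] //= /orP[/eqP[<-]|//]; apply: oend_incident.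
Qed.

Lemma Yfold1_inj (s : {u | u != v1}) E F : incident (inl s : vert YG) E ->
  incident (inl s : vert YG) F -> Yfold1 E = Yfold1 F -> E = F.
Proof.
case: E => [[e|e]|i]; case: F => [[f|f]|j] //= _ _.
- by move/val_inj->.
- by move=> He; have /= := valP e; rewrite He x_incident.
- by move=> Hf; have /= := valP f; rewrite -Hf x_incident.
- by move/x_inj->.
Qed.

Lemma Yfold1_onto (s : {u | u != v1}) e : incident (val s) e ->
  exists2 E, incident (inl s : vert YG) E & Yfold1 E = e.
Proof.
move=> Hs; have [Hv|Hv] := boolP (incident v1 e).
  have [j Hj] := x_cover Hv; exists (inr j) => //.
  apply/orP; left; apply/eqP; congr inl; apply: val_inj => /=.
  by apply: oend_eq; rewrite ?Hj ?(valP s).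
by exists (inl (inl (exist _ e Hv))).
Qed.

Lemma Yfold2_incident (s : {u | u != v2}) E :
  incident (inr s : vert YG) E -> incident (val s) (Yfold2 E).
Proof.
by case: E => [[e|e]|j] //= /orP[//|/eqP[<-]]; apply: oend_incident.
Qed.

Lemma Yfold2_inj (s : {u | u != v2}) E F : incident (inr s : vert YG) E ->
  incident (inr s : vert YG) F -> Yfold2 E = Yfold2 F -> E = F.
Proof.
case: E => [[e|e]|i]; case: F => [[f|f]|j] //= _ _.
- by move/val_inj->.
- by move=> He; have /= := valP e; rewrite He y_incident.
- by move=> Hf; have /= := valP f; rewrite -Hf y_incident.
- by move/y_inj->.
Qed.

Lemma Yfold2_onto (s : {u | u != v2}) e : incident (val s) e ->
  exists2 E, incident (inr s : vert YG) E & Yfold2 E = e.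
Proof.
move=> Hs; have [Hv|Hv] := boolP (incident v2 e).
  have [j Hj] := y_cover Hv; exists (inr j) => //.
  apply/orP; right; apply/eqP; congr inr; apply: val_inj => /=.
  by apply: oend_eq; rewrite ?Hj ?(valP s).
by exists (inl (inr (exist _ e Hv))).
Qed.

Lemma cubicY : cubic YG.
Proof.
case=> s.
- rewrite (card_incident_local (@Yfold1_incident s) (@Yfold1_inj s)) ?cubicG1 //.
  exact: Yfold1_onto.
- rewrite (card_incident_local (@Yfold2_incident s) (@Yfold2_inj s)) ?cubicG2 //.
  exact: Yfold2_onto.
Qed.

Lemma Ycol_proper (c : coloring G1) (d : coloring G2) (f : coloring YG) :
  proper_coloring c -> proper_coloring d -> Ycol c d f -> proper_coloring f.
Proof.
move=> Hc Hd [p [Hp Hf]] E F [s|s].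
- apply: (proper_local (@Yfold1_incident s) (@Yfold1_inj s) (q := 1%g) _ Hc).
  by case=> [[e|e]|j]; rewrite Hf perm1.
- apply: (proper_local (@Yfold2_incident s) (@Yfold2_inj s) (q := p) _ Hd).
  by case=> [[e|e]|j]; rewrite Hf //= Hp.
Qed.

Definition Yleft : {set vert YG} := [set u | if u is inl _ then true else false].

Lemma card_Yleft : #|Yleft| = #|vert G1|.-1.
Proof.
rewrite (_ : Yleft = inl @: setT); last first.
  by apply/setP => -[u|u]; rewrite !inE; [apply/esym/imsetP; exists u | apply/esym/imsetP => -[]].
by rewrite card_imset ?cardsT ?card_sig -?(cardC1 v1) //; move=> u w [].
Qed.

Lemma card_Ycut (P : pred (edge YG)) :
  #|[set E | P E && crosses Yleft E]| = #|[set j | P (inr j)]|.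
Proof.
rewrite -[RHS](card_imset _ (inr_inj : injective (inr : 'I_3 -> edge YG))).
apply: eq_card => E; rewrite !inE.
case: E => [[e|e]|j]; rewrite /crosses !inE ?andbF ?andbT.
- by apply/esym/imsetP => -[].
- by apply/esym/imsetP => -[].
- by apply/idP/imsetP => [HP|[i]]; [exists j; rewrite ?inE | rewrite inE => Hi [->]].
Qed.

Section ProperCut.
Variables (c : coloring G1) (f : coloring YG).
Hypotheses (c_proper : proper_coloring c) (f_proper : proper_coloring f).

(* [G1 - v1] has an odd number of vertices, so every color occurs an odd number
   of times on the three cut edges. *)
Lemma odd_Ycut_color k : odd #|[set j | f (inr j) == k]|.
Proof.
rewrite -(card_Ycut (fun E => f E == k)) (cubic_odd_cut cubicY k Yleft f_proper) card_Yleft.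
have : 0 < #|vert G1| by apply/card_gt0P; exists v1.
by case: #|vert G1| (cubic_even_order cubicG1 c_proper) => // n; rewrite /= negbK.
Qed.

(* Two cut edges of color k would force the third to have color k too, leaving
   another color with no cut edge. *)
Lemma Ycut_inj : injective (fun j => f (inr j)).
Proof.
move=> i j /= Hij; apply/eqP; apply: contraT => Hneq.
set k := f (inr i); set k' : 'I_3 := if k == ord0 then ord_max else ord0.
have Hk' : k' != k by rewrite /k'; case: (k =P ord0) => [->|/eqP]; rewrite // eq_sym.
have Hall : [set l | f (inr l) == k] = setT.
  apply/eqP; rewrite eqEcard subsetT cardsT card_ord.
  have /subset_leq_card : [set i; j] \subset [set l | f (inr l) == k].
    by apply/subsetP => l; rewrite !inE => /orP[]/eqP->; rewrite /k ?Hij.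
  rewrite cards2 Hneq.
  have := max_card (mem [set l | f (inr l) == k]); rewrite card_ord.
  by have := odd_Ycut_color k; case: #|_| => [|[|[|[|n]]]].
have := odd_Ycut_color k'.
suff -> : [set l | f (inr l) == k'] = set0 by rewrite cards0.
apply/setP => l; rewrite !inE; apply: contraNF Hk' => /eqP <-.
by have := in_setT l; rewrite -Hall inE.
Qed.

Lemma Ycut_onto k : exists j, f (inr j) = k.
Proof.
by have /codomP[j ->] := inj_card_onto Ycut_inj (leqnn _) k; exists j.
Qed.

Definition Yanchor j : vert YG := (ends (inr j : edge YG)).1.

(* The (a,b)-chain through the [G1]-end of the cut edge colored a must leave
   [G1 - v1] through the cut edge colored b. *)
Lemma Ycut_kconnect a b ja j : f (inr ja) = a -> f (inr j) \in [:: a; b] ->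
  connect (kadj f a b) (Yanchor ja) (Yanchor j).
Proof.
move=> Ha; rewrite !inE => /orP[]/eqP Hj.
  by rewrite (Ycut_inj (etrans Hj (esym Ha))); apply: connect0.
set P := fun k (E : edge YG) => (f E == k) && connect (kadj f a b) (Yanchor ja) (ends E).1.
have Hodd k : k \in [:: a; b] -> odd #|[set i | P k (inr i)]| =
    odd #|[set u in Yleft | connect (kadj f a b) (Yanchor ja) u]|.
  by move=> Hk; rewrite -(card_Ycut (P k)) (odd_kchain_cut cubicY _ _ f_proper Hk).
have Pa : [set i | P a (inr i)] = [set ja].
  apply/setP => i; rewrite !inE /P; apply/andP/eqP => [[/eqP Hi _]|->].
    by apply: Ycut_inj; rewrite /= Hi Ha.
  by rewrite Ha eqxx connect0.
have /odd_gt0/card_gt0P[i] : odd #|[set i | P b (inr i)]|.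
  by rewrite (Hodd b) ?inE ?eqxx ?orbT // -(Hodd a) ?inE ?eqxx // Pa cards1.
rewrite inE /P => /andP[/eqP Hi].
by rewrite -(Ycut_inj (etrans Hi (esym Hj))).
Qed.
End ProperCut.

Definition Yemb1 (e : edge G1) : edge YG :=
  if insub e is Some e' then inl (inl e') else inr (odflt ord0 [pick j | x j == e]).
Definition Yemb2 (e : edge G2) : edge YG :=
  if insub e is Some e' then inl (inr e') else inr (odflt ord0 [pick j | y j == e]).

Lemma Yemb1_x j : Yemb1 (x j) = inr j.
Proof.
rewrite /Yemb1 insubF ?x_incident //; case: pickP => [i /eqP/x_inj -> //|].
by move/(_ j); rewrite eqxx.
Qed.

Lemma Yemb2_y j : Yemb2 (y j) = inr j.
Proof.
rewrite /Yemb2 insubF ?y_incident //; case: pickP => [i /eqP/y_inj -> //|].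
by move/(_ j); rewrite eqxx.
Qed.

Lemma Yemb1_out e (He : ~~ incident v1 e) : Yemb1 e = inl (inl (exist _ e He)).
Proof. by rewrite /Yemb1 insubT. Qed.

Lemma Yemb2_out e (He : ~~ incident v2 e) : Yemb2 e = inl (inr (exist _ e He)).
Proof. by rewrite /Yemb2 insubT. Qed.

Definition Yproj1 (u : vert YG) : vert G1 := if u is inl s then val s else v1.
Definition Yproj2 (u : vert YG) : vert G2 := if u is inr s then val s else v2.

Lemma Yemb1_ends e :
  (Yproj1 (ends (Yemb1 e)).1 = (ends e).1 /\ Yproj1 (ends (Yemb1 e)).2 = (ends e).2) \/
  (Yproj1 (ends (Yemb1 e)).1 = (ends e).2 /\ Yproj1 (ends (Yemb1 e)).2 = (ends e).1).
Proof.
have [/x_cover[j <-]|He] := boolP (incident v1 e); last by rewrite (Yemb1_out He); left.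
by rewrite Yemb1_x /=; case: (oend_ends (x_incident j)) => ->; [right|left].
Qed.

Lemma Yemb2_ends e :
  (Yproj2 (ends (Yemb2 e)).1 = (ends e).1 /\ Yproj2 (ends (Yemb2 e)).2 = (ends e).2) \/
  (Yproj2 (ends (Yemb2 e)).1 = (ends e).2 /\ Yproj2 (ends (Yemb2 e)).2 = (ends e).1).
Proof.
have [/y_cover[j <-]|He] := boolP (incident v2 e); last by rewrite (Yemb2_out He); left.
by rewrite Yemb2_y /=; case: (oend_ends (y_incident j)) => ->; [left|right].
Qed.

Lemma Yproj1_collapse E : Yproj1 (ends E).1 = Yproj1 (ends E).2 \/ exists e, Yemb1 e = E.
Proof.
case: E => [[[e He]|e]|j]; [right; exists e; rewrite Yemb1_out | left | right; exists (x j)];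
  by rewrite ?Yemb1_x.
Qed.

Lemma Yproj2_collapse E : Yproj2 (ends E).1 = Yproj2 (ends E).2 \/ exists e, Yemb2 e = E.
Proof.
case: E => [[e|[e He]]|j]; [left | right; exists e; rewrite Yemb2_out | right; exists (y j)];
  by rewrite ?Yemb2_y.
Qed.

Lemma restrict_Ycol1 c d f : Ycol c d f -> restrict Yemb1 f = c.
Proof.
case=> p [Hp Hf]; apply/ffunP => e; rewrite ffunE.
have [/x_cover[j <-]|He] := boolP (incident v1 e); first by rewrite Yemb1_x Hf.
by rewrite (Yemb1_out He) Hf.
Qed.

Lemma restrict_Ycol2 c d f : Ycol c d f -> exists p, restrict Yemb2 f = recolor p d.
Proof.
case=> p [Hp Hf]; exists p; apply/ffunP => e; rewrite !ffunE.
have [/y_cover[j <-]|He] := boolP (incident v2 e); first by rewrite Yemb2_y Hf Hp.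
by rewrite (Yemb2_out He) Hf.
Qed.

(* [v1] and [v2] are lifted to the anchor of the cut edge colored a, which by
   [Ycut_kconnect] lies in the chain of every (a,b)-colored cut edge. *)
Definition Ylift1 ja (u : vert G1) : vert YG := oapp inl (Yanchor ja) (insub u).
Definition Ylift2 ja (u : vert G2) : vert YG := oapp inr (Yanchor ja) (insub u).

Lemma Ylift1_out ja u (Hu : u != v1) : Ylift1 ja u = inl (exist _ u Hu).
Proof. by rewrite /Ylift1 insubT. Qed.

Lemma Ylift2_out ja u (Hu : u != v2) : Ylift2 ja u = inr (exist _ u Hu).
Proof. by rewrite /Ylift2 insubT. Qed.

Lemma Ylift1_v1 ja : Ylift1 ja v1 = Yanchor ja.
Proof. by rewrite /Ylift1 insubF ?eqxx. Qed.

Lemma Ylift2_v2 ja : Ylift2 ja v2 = Yanchor ja.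
Proof. by rewrite /Ylift2 insubF ?eqxx. Qed.

Lemma kchain_lift_Y1 (c : coloring G1) (f : coloring YG) a b :
  proper_coloring c -> proper_coloring f -> exists psi, kchain_lift Yemb1 f a b psi.
Proof.
move=> Hc Hf; have [ja Ha] := Ycut_onto Hc Hf a; exists (Ylift1 ja) => e.
have [/x_cover[j <-]|He] := boolP (incident v1 e).
  rewrite Yemb1_x => Hj.
  have Hv1 := Ycut_kconnect Hc Hf Ha Hj; rewrite -Ylift1_v1 in Hv1.
  have Hother := Ylift1_out ja (oend_neq v1 (x j)).
  by case: (oend_ends (x_incident j)) => -> /=; rewrite Hother; split => //; apply: connect0.
rewrite (Yemb1_out He) (Ylift1_out _ (notinc_neq1 He)) (Ylift1_out _ (notinc_neq2 He)) => Hab.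
split; first by apply: eq_connect0; congr inl; apply: val_inj.
by apply: connect1; rewrite kadj_sym; apply: (kadj_ends Hab).
Qed.

Lemma kchain_lift_Y2 (c : coloring G1) (f : coloring YG) a b :
  proper_coloring c -> proper_coloring f -> exists psi, kchain_lift Yemb2 f a b psi.
Proof.
move=> Hc Hf; have [ja Ha] := Ycut_onto Hc Hf a; exists (Ylift2 ja) => e.
have [/y_cover[j <-]|He] := boolP (incident v2 e).
  rewrite Yemb2_y => Hj.
  have Hv2 := Ycut_kconnect Hc Hf Ha Hj; rewrite -Ylift2_v2 in Hv2.
  have Hother : connect (kadj f a b) (Ylift2 ja (oend v2 (y j))) (Yanchor j).
    by rewrite (Ylift2_out ja (oend_neq v2 (y j))); apply: kconnect_ends.
  by case: (oend_ends (y_incident j)) => -> /=.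
rewrite (Yemb2_out He) (Ylift2_out _ (notinc_neq1 He)) (Ylift2_out _ (notinc_neq2 He)) => Hab.
split; first by apply: eq_connect0; congr inr; apply: val_inj.
by apply: connect1; rewrite kadj_sym; apply: (kadj_ends Hab).
Qed.

Lemma Ycol_kequiv (c1 c2 : coloring G1) (d1 d2 : coloring G2) (f1 f2 : coloring YG) :
  proper_coloring c1 -> proper_coloring d1 ->
  Ycol c1 d1 f1 -> Ycol c2 d2 f2 -> kequiv f1 f2 -> kequiv c1 c2 /\ kequiv d1 d2.
Proof.
move=> Hc1 Hd1 Hf1 Hf2 Hk; have Hp1 := Ycol_proper Hc1 Hd1 Hf1.
split.
  rewrite -(restrict_Ycol1 Hf1) -(restrict_Ycol1 Hf2).
  apply: (restrict_kequiv Yemb1_ends Yproj1_collapse) Hp1 Hk => f a b Hf _.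
  exact: kchain_lift_Y1 Hc1 Hf.
have [[p1 Hp1d] [p2 Hp2d]] := (restrict_Ycol2 Hf1, restrict_Ycol2 Hf2).
have : kequiv (recolor p1 d1) (recolor p2 d2).
  rewrite -Hp1d -Hp2d; apply: (restrict_kequiv Yemb2_ends Yproj2_collapse) Hp1 Hk.
  by move=> f a b Hf _; apply: kchain_lift_Y2 Hc1 Hf.
move/(kequiv_trans (kequiv_recolor d1 p1))/kequiv_trans; apply.
exact/kequiv_sym/kequiv_recolor.
Qed.
End CompositionY.

Section CompositionH.
Variables (G1 G2 : mgraph) (x : edge G1) (y : edge G2).
Variables (s11 s12 : vert G1) (s21 s22 : vert G2).
Hypotheses (cubicG1 : cubic G1) (cubicG2 : cubic G2).
Hypothesis x_ends : ends x = (s11, s12) \/ ends x = (s12, s11).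
Hypothesis y_ends : ends y = (s21, s22) \/ ends y = (s22, s21).
Local Notation HG := (Hgraph x y s11 s12 s21 s22).

Lemma s11_neq_s12 : s11 != s12.
Proof. by have := loopless x; case: x_ends => -> //=; rewrite eq_sym. Qed.

Lemma s21_neq_s22 : s21 != s22.
Proof. by have := loopless y; case: y_ends => -> //=; rewrite eq_sym. Qed.

Lemma incident_x u : incident u x = (u == s11) || (u == s12).
Proof. by rewrite /incident; case: x_ends => -> /=; rewrite !(eq_sym u) // orbC. Qed.

Lemma incident_y u : incident u y = (u == s21) || (u == s22).
Proof. by rewrite /incident; case: y_ends => -> /=; rewrite !(eq_sym u) // orbC. Qed.

Definition Hfold1 (E : edge HG) : edge G1 := if E is inl (inl e) then val e else x.
Definition Hfold2 (E : edge HG) : edge G2 := if E is inl (inr e) then val e else y.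

Lemma Hfold1_incident u E : incident (inl u : vert HG) E -> incident u (Hfold1 E).
Proof.
case: E => [[e|e]|[]] //; rewrite /incident /= orbF => /eqP[<-];
  by case: x_ends => -> /=; rewrite eqxx ?orbT.
Qed.

Lemma Hfold2_incident u E : incident (inr u : vert HG) E -> incident u (Hfold2 E).
Proof.
case: E => [[e|e]|[]] //; rewrite /incident /= => /eqP[<-];
  by case: y_ends => -> /=; rewrite eqxx ?orbT.
Qed.

Lemma Hfold1_inj u E F : incident (inl u : vert HG) E -> incident (inl u : vert HG) F ->
  Hfold1 E = Hfold1 F -> E = F.
Proof.
case: E => [[e|e]|[]]; case: F => [[f|f]|[]] //=.
- by move=> _ _ /val_inj->.
- by move=> _ _ He; have /= := valP e; rewrite He eqxx.
- by move=> _ _ He; have /= := valP e; rewrite He eqxx.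
- by move=> _ _ Hf; have /= := valP f; rewrite -Hf eqxx.
- by rewrite /incident /= !orbF => /eqP[<-] /eqP[Hs]; move: s11_neq_s12; rewrite Hs eqxx.
- by move=> _ _ Hf; have /= := valP f; rewrite -Hf eqxx.
- by rewrite /incident /= !orbF => /eqP[<-] /eqP[Hs]; move: s11_neq_s12; rewrite Hs eqxx.
Qed.

Lemma Hfold2_inj u E F : incident (inr u : vert HG) E -> incident (inr u : vert HG) F ->
  Hfold2 E = Hfold2 F -> E = F.
Proof.
case: E => [[e|e]|[]]; case: F => [[f|f]|[]] //=.
- by move=> _ _ /val_inj->.
- by move=> _ _ He; have /= := valP e; rewrite He eqxx.
- by move=> _ _ He; have /= := valP e; rewrite He eqxx.
- by move=> _ _ Hf; have /= := valP f; rewrite -Hf eqxx.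
- by rewrite /incident /= => /eqP[<-] /eqP[Hs]; move: s21_neq_s22; rewrite Hs eqxx.
- by move=> _ _ Hf; have /= := valP f; rewrite -Hf eqxx.
- by rewrite /incident /= => /eqP[<-] /eqP[Hs]; move: s21_neq_s22; rewrite Hs eqxx.
Qed.

Lemma Hfold1_onto u e : incident u e -> exists2 E, incident (inl u : vert HG) E & Hfold1 E = e.
Proof.
case: (e =P x) => [->|/eqP He Hu]; last by exists (inl (inl (exist _ e He))).
rewrite incident_x => /orP[]/eqP->; [exists (inr false) | exists (inr true)] => //;
  by rewrite /incident /= eqxx.
Qed.

Lemma Hfold2_onto u e : incident u e -> exists2 E, incident (inr u : vert HG) E & Hfold2 E = e.
Proof.
case: (e =P y) => [->|/eqP He Hu]; last by exists (inl (inr (exist _ e He))).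
rewrite incident_y => /orP[]/eqP->; [exists (inr false) | exists (inr true)] => //;
  by rewrite /incident /= eqxx.
Qed.

Lemma cubicH : cubic HG.
Proof.
case=> u.
- rewrite (card_incident_local (@Hfold1_incident u) (@Hfold1_inj u)) ?cubicG1 //.
  exact: Hfold1_onto.
- rewrite (card_incident_local (@Hfold2_incident u) (@Hfold2_inj u)) ?cubicG2 //.
  exact: Hfold2_onto.
Qed.

Lemma Hcol_proper (c : coloring G1) (d : coloring G2) (f : coloring HG) :
  proper_coloring c -> proper_coloring d -> Hcol c d f -> proper_coloring f.
Proof.
move=> Hc Hd [p [Hp Hf]] E F [u|u].
- apply: (proper_local (@Hfold1_incident u) (@Hfold1_inj u) (q := 1%g) _ Hc).
  by case=> [[e|e]|bb]; rewrite Hf perm1.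
- apply: (proper_local (@Hfold2_incident u) (@Hfold2_inj u) (q := p) _ Hd).
  by case=> [[e|e]|bb]; rewrite Hf //= Hp.
Qed.

Definition Hleft : {set vert HG} := [set u | if u is inl _ then true else false].

Lemma card_Hleft : #|Hleft| = #|vert G1|.
Proof.
rewrite (_ : Hleft = inl @: setT); last first.
  by apply/setP => -[u|u]; rewrite !inE; [apply/esym/imsetP; exists u | apply/esym/imsetP => -[]].
by rewrite card_imset ?cardsT //; move=> u w [].
Qed.

Lemma card_Hcut (P : pred (edge HG)) :
  #|[set E | P E && crosses Hleft E]| = #|[set bb | P (inr bb)]|.
Proof.
rewrite -[RHS](card_imset _ (inr_inj : injective (inr : bool -> edge HG))).
apply: eq_card => E; rewrite !inE.
case: E => [[e|e]|bb].
- by rewrite /crosses !inE andbF; apply/esym/imsetP => -[].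
- by rewrite /crosses !inE andbF; apply/esym/imsetP => -[].
- have -> : crosses Hleft (inr bb) = true by case: bb; rewrite /crosses !inE.
  rewrite andbT; apply/idP/imsetP => [HP|[i]]; first by exists bb; rewrite ?inE.
  by rewrite inE => Hi [->].
Qed.

Section ProperCut.
Variables (c : coloring G1) (f : coloring HG).
Hypotheses (c_proper : proper_coloring c) (f_proper : proper_coloring f).

(* [G1] has an even number of vertices, so both cut edges get the same color. *)
Lemma Hcut_same : f (inr true) = f (inr false).
Proof.
set k := f (inr false); apply/eqP; apply: contraT => Hne.
have := cubic_odd_cut cubicH k Hleft f_proper.
rewrite card_Hcut card_Hleft (negbTE (cubic_even_order cubicG1 c_proper)).
suff -> : [set bb | f (inr bb) == k] = [set false] by rewrite cards1.
by apply/setP => -[]; rewrite !inE ?(negbTE Hne) ?eqxx.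
Qed.

(* The (a,b)-chain entering [G1] through one cut edge must leave through the other. *)
Lemma Hcut_kconnect a b : a != b -> f (inr false) \in [:: a; b] ->
  connect (kadj f a b) (inl s11) (inl s12).
Proof.
move=> Hab Hk; set k := f (inr false) in Hk; set k' := if k == a then b else a.
have Hk' : k' \in [:: a; b] by rewrite /k'; case: (k == a); rewrite !inE eqxx ?orbT.
have Hkk' : k != k'.
  rewrite /k'; case: (k =P a) => [->//|Hka].
  by move: Hk; rewrite !inE => /orP[/eqP/Hka|/eqP->] //; rewrite eq_sym.
set P := fun kk (E : edge HG) => (f E == kk) && connect (kadj f a b) (inl s11) (ends E).1.
have Hodd kk : kk \in [:: a; b] -> odd #|[set bb | P kk (inr bb)]| =
    odd #|[set u in Hleft | connect (kadj f a b) (inl s11) u]|.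
  by move=> Hkk; rewrite -(card_Hcut (P kk)) (odd_kchain_cut cubicH _ _ f_proper Hkk).
have := Hodd k' Hk'; rewrite -(Hodd k Hk).
have -> : [set bb | P k' (inr bb)] = set0.
  by apply/setP => -[]; rewrite !inE /P ?Hcut_same -/k (negbTE Hkk').
rewrite cards0 => /esym; apply: contraFT => Hnot.
suff -> : [set bb | P k (inr bb)] = [set false] by rewrite cards1.
by apply/setP => -[]; rewrite !inE /P ?Hcut_same -/k eqxx ?connect0 //= (negbTE Hnot).
Qed.
End ProperCut.

(* [x] is represented by the cut edge s11 s21; sending [G2] to [s12] collapses
   the other cut edge. *)
Definition Hemb1 (e : edge G1) : edge HG := if insub e is Some e' then inl (inl e') else inr false.
Definition Hemb2 (e : edge G2) : edge HG := if insub e is Some e' then inl (inr e') else inr false.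
Definition Hproj1 (u : vert HG) : vert G1 := if u is inl w then w else s12.
Definition Hproj2 (u : vert HG) : vert G2 := if u is inr w then w else s22.

Lemma Hemb1_out e (He : e != x) : Hemb1 e = inl (inl (exist _ e He)).
Proof. by rewrite /Hemb1 insubT. Qed.

Lemma Hemb2_out e (He : e != y) : Hemb2 e = inl (inr (exist _ e He)).
Proof. by rewrite /Hemb2 insubT. Qed.

Lemma Hemb1_x : Hemb1 x = inr false.
Proof. by rewrite /Hemb1 insubF ?eqxx. Qed.

Lemma Hemb2_y : Hemb2 y = inr false.
Proof. by rewrite /Hemb2 insubF ?eqxx. Qed.

Lemma Hemb1_ends e :
  (Hproj1 (ends (Hemb1 e)).1 = (ends e).1 /\ Hproj1 (ends (Hemb1 e)).2 = (ends e).2) \/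
  (Hproj1 (ends (Hemb1 e)).1 = (ends e).2 /\ Hproj1 (ends (Hemb1 e)).2 = (ends e).1).
Proof.
case: (e =P x) => [->|/eqP He]; last by rewrite (Hemb1_out He); left.
by rewrite Hemb1_x; case: x_ends => ->; [left|right].
Qed.

Lemma Hemb2_ends e :
  (Hproj2 (ends (Hemb2 e)).1 = (ends e).1 /\ Hproj2 (ends (Hemb2 e)).2 = (ends e).2) \/
  (Hproj2 (ends (Hemb2 e)).1 = (ends e).2 /\ Hproj2 (ends (Hemb2 e)).2 = (ends e).1).
Proof.
case: (e =P y) => [->|/eqP He]; last by rewrite (Hemb2_out He); left.
by rewrite Hemb2_y; case: y_ends => ->; [right|left].
Qed.

Lemma Hproj1_collapse E : Hproj1 (ends E).1 = Hproj1 (ends E).2 \/ exists e, Hemb1 e = E.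
Proof.
case: E => [[[e He]|e]|[]]; [right; exists e; rewrite Hemb1_out | left | left | right; exists x];
  by rewrite ?Hemb1_x.
Qed.

Lemma Hproj2_collapse E : Hproj2 (ends E).1 = Hproj2 (ends E).2 \/ exists e, Hemb2 e = E.
Proof.
case: E => [[e|[e He]]|[]]; [left | right; exists e; rewrite Hemb2_out | left | right; exists y];
  by rewrite ?Hemb2_y.
Qed.

Lemma restrict_Hcol1 c d f : Hcol c d f -> restrict Hemb1 f = c.
Proof.
case=> p [Hp Hf]; apply/ffunP => e; rewrite ffunE.
by case: (e =P x) => [->|/eqP He]; rewrite ?Hemb1_x ?(Hemb1_out He) Hf.
Qed.

Lemma restrict_Hcol2 c d f : Hcol c d f -> exists p, restrict Hemb2 f = recolor p d.
Proof.
case=> p [Hp Hf]; exists p; apply/ffunP => e; rewrite !ffunE.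
by case: (e =P y) => [->|/eqP He]; rewrite ?Hemb2_y ?(Hemb2_out He) Hf ?Hp.
Qed.

Lemma kchain_lift_H1 (c : coloring G1) (f : coloring HG) a b :
  proper_coloring c -> proper_coloring f -> a != b -> kchain_lift Hemb1 f a b inl.
Proof.
move=> Hc Hf Hab e; case: (e =P x) => [->|/eqP He].
  rewrite Hemb1_x => /(Hcut_kconnect Hc Hf Hab) Hconn.
  by rewrite kconnect_sym in Hconn; case: x_ends => -> /=; rewrite connect0.
rewrite (Hemb1_out He) => Hc_e; split; first exact: connect0.
exact: (kconnect_ends (e := inl (inl (exist _ e He)) : edge HG)).
Qed.

Lemma kchain_lift_H2 (c : coloring G1) (f : coloring HG) a b :
  proper_coloring c -> proper_coloring f -> a != b -> kchain_lift Hemb2 f a b inr.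
Proof.
move=> Hc Hf Hab e; case: (e =P y) => [->|/eqP He].
  rewrite Hemb2_y => Hk.
  have H21 : connect (kadj f a b) (inr s21) (inl s11).
    exact: (kconnect_ends (e := inr false : edge HG)).
  have H22 : connect (kadj f a b) (inr s22) (inl s11).
    have Hk' : f (inr true) \in [:: a; b] by rewrite (Hcut_same Hc Hf).
    apply: connect_trans (kconnect_ends (e := inr true : edge HG) Hk') _.
    by rewrite kconnect_sym; apply: (Hcut_kconnect Hc Hf Hab).
  by case: y_ends => -> /=.
rewrite (Hemb2_out He) => Hc_e; split; first exact: connect0.
exact: (kconnect_ends (e := inl (inr (exist _ e He)) : edge HG)).
Qed.

Lemma Hcol_kequiv (c1 c2 : coloring G1) (d1 d2 : coloring G2) (f1 f2 : coloring HG) :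
  proper_coloring c1 -> proper_coloring d1 ->
  Hcol c1 d1 f1 -> Hcol c2 d2 f2 -> kequiv f1 f2 -> kequiv c1 c2 /\ kequiv d1 d2.
Proof.
move=> Hc1 Hd1 Hf1 Hf2 Hk; have Hp1 := Hcol_proper Hc1 Hd1 Hf1.
split.
  rewrite -(restrict_Hcol1 Hf1) -(restrict_Hcol1 Hf2).
  apply: (restrict_kequiv Hemb1_ends Hproj1_collapse) Hp1 Hk => f a b Hf Hab.
  by exists inl; apply: kchain_lift_H1 Hc1 Hf Hab.
have [[p1 Hp1d] [p2 Hp2d]] := (restrict_Hcol2 Hf1, restrict_Hcol2 Hf2).
have : kequiv (recolor p1 d1) (recolor p2 d2).
  rewrite -Hp1d -Hp2d; apply: (restrict_kequiv Hemb2_ends Hproj2_collapse) Hp1 Hk.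
  by move=> f a b Hf Hab; exists inr; apply: kchain_lift_H2 Hc1 Hf Hab.
move/(kequiv_trans (kequiv_recolor d1 p1))/kequiv_trans; apply.
exact/kequiv_sym/kequiv_recolor.
Qed.
End CompositionH.

Theorem lemma11 (G1 G2 : mgraph) :
  cubic G1 -> cubic G2 -> colorable3 G1 -> colorable3 G2 ->
  (forall (v1 : vert G1) (v2 : vert G2)
          (x : 'I_3 -> edge G1) (y : 'I_3 -> edge G2),
     injective x -> (forall j, incident v1 (x j)) ->
     injective y -> (forall j, incident v2 (y j)) ->
     forall (c1 c2 : coloring G1) (d1 d2 : coloring G2)
            (f1 f2 : coloring (Ygraph v1 v2 x y)),
       proper_coloring c1 -> proper_coloring c2 -> proper_coloring d1 -> proper_coloring d2 ->
       Ycol c1 d1 f1 -> Ycol c2 d2 f2 ->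
       kequiv f1 f2 -> kequiv c1 c2 /\ kequiv d1 d2) /\
  (forall (x : edge G1) (y : edge G2)
          (s11 s12 : vert G1) (s21 s22 : vert G2),
     (ends x = (s11, s12) \/ ends x = (s12, s11)) ->
     (ends y = (s21, s22) \/ ends y = (s22, s21)) ->
     forall (c1 c2 : coloring G1) (d1 d2 : coloring G2)
            (f1 f2 : coloring (Hgraph x y s11 s12 s21 s22)),
       proper_coloring c1 -> proper_coloring c2 -> proper_coloring d1 -> proper_coloring d2 ->
       Hcol c1 d1 f1 -> Hcol c2 d2 f2 ->
       kequiv f1 f2 -> kequiv c1 c2 /\ kequiv d1 d2).
Proof.
move=> cubicG1 cubicG2 _ _; split.
- move=> v1 v2 x y x_inj x_incident y_inj y_incident c1 c2 d1 d2 f1 f2 Hc1 _ Hd1 _.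
  exact: Ycol_kequiv.
- move=> x y s11 s12 s21 s22 x_ends y_ends c1 c2 d1 d2 f1 f2 Hc1 _ Hd1 _.
  exact: Hcol_kequiv.
Qed.
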